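(* Let $\mathcal X$ be a finite abelian group, $\mathcal Z$ a finite set, $P_{XZ}$ a distribution on $\mathcal X\times\mathcal Z$ and $W_{XZ|X}(x,z|x'):=P_{XZ}(x-x',z)$ the associated conditional additive channel. For any finite set $\mathcal M$ and distribution $P_M$ on $\mathcal M$: (1) for every $s\in(0,1)$, \[P_{js}(P_M,W_{XZ|X})\le\Big(\frac{e^{H_{1-s}(M)+H^{\downarrow}_{1-s}(X|Z)}}{|\mathcal X|}\Big)^{s};\] (2) for every $s\in(0,\tfrac12]$, \[P_{js}(P_M,W_{XZ|X})\le\Big(\frac{e^{H_{1-s}(M)+H^{\uparrow}_{1-s}(X|Z)}}{|\mathcal X|}\Big)^{\frac{s}{1-s}}.\]
   Context: A code $\phi=(\mathsf e,\mathsf d)$ consists of $\mathsf e:\mathcal M\to\mathcal X$ and $\mathsf d:\mathcal X\times\mathcal Z\to\mathcal M$; $P_{js}[\phi|P_M,W]:=\sum_m P_M(m)W(\{y:\mathsf d(y)\ne m\}|\mathsf e(m))$ and $P_{js}(P_M,W):=\inf_\phi P_{js}[\phi|P_M,W]$. $H_{1-s}(M):=\frac1s\log\sum_mP_M(m)^{1-s}$. For a distribution $Q_Z$ on $\mathcal Z$, $H_{1-s}(P_{XZ}|Q_Z):=\frac1s\log\sum_{x,z}P_{XZ}(x,z)^{1-s}Q_Z(z)^s$ (sum over the support of $P_{XZ}$). $H^{\downarrow}_{1-s}(X|Z):=H_{1-s}(P_{XZ}|P_Z)$ with $P_Z$ the marginal, and $H^{\uparrow}_{1-s}(X|Z):=H_{1-s}(P_{XZ}|P_Z^{(1-s)})$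 where $P_Z^{(1-s)}(z):=\big[\sum_xP_{XZ}(x,z)^{1-s}\big]^{\frac1{1-s}}\big/\sum_{z'}\big[\sum_xP_{XZ}(x,z')^{1-s}\big]^{\frac1{1-s}}$. *)

From HB Require Import structures.
From mathcomp Require Import all_boot all_order all_algebra.
From Stdlib Require Import Reals ClassicalEpsilon.
Set Implicit Arguments. Unset Strict Implicit. Unset Printing Implicit Defensive.

Local Open Scope R_scope.

Notation "\rsum_ ( i : T ) F" := (\big[Rplus/0%R]_(i : T) F)
  (at level 41, F at level 41, i, T at level 50).

(* x^y with the convention 0^y = 0 (used only for y > 0, i.e. on/off support) *)
Definition rpow (x y : R) : R := if Rlt_dec 0 x then Rpower x y else 0.

Definition is_distr (T : finType) (P : T -> R) : Prop :=
  (forall t, 0 <= P t) /\ \rsum_(t : T) P t = 1.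

Definition is_inf (S : R -> Prop) (r : R) : Prop :=
  (forall x, S x -> r <= x) /\ (forall b, (forall x, S x -> b <= x) -> b <= r).
Definition Inf (S : R -> Prop) : R := epsilon (inhabits 0) (is_inf S).

(* channel W y x = W(y|x), output alphabet Y, input alphabet X *)
Definition Pjs_code (M X Y : finType) (PM : M -> R) (W : Y -> X -> R)
  (e : M -> X) (d : Y -> M) : R :=
  \rsum_(m : M) (PM m * \rsum_(y : Y) (if d y != m then W y (e m) else 0)).

Definition Pjs (M X Y : finType) (PM : M -> R) (W : Y -> X -> R) : R :=
  Inf (fun r => exists (e : M -> X) (d : Y -> M), r = Pjs_code PM W e d).

Definition add_channel (X : finZmodType) (Z : finType) (PXZ : X * Z -> R)
  : X * Z -> X -> R :=
  fun xz x' => PXZ (GRing.add xz.1 (GRing.opp x'), xz.2).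

(* H_{1-s}(M) *)
Definition renyiH (M : finType) (PM : M -> R) (s : R) : R :=
  / s * ln (\rsum_(m : M) rpow (PM m) (1 - s)).

(* H_{1-s}(P_XZ | Q_Z); the sum is over the support of P_XZ *)
Definition renyiH_cond (X Z : finType) (PXZ : X * Z -> R) (QZ : Z -> R) (s : R) : R :=
  / s * ln (\rsum_(xz : X * Z)
     (if Rlt_dec 0 (PXZ xz) then Rpower (PXZ xz) (1 - s) * rpow (QZ xz.2) s else 0)).

Definition marginalZ (X Z : finType) (PXZ : X * Z -> R) (z : Z) : R :=
  \rsum_(x : X) PXZ (x, z).

Definition tiltedZ (X Z : finType) (PXZ : X * Z -> R) (s : R) (z : Z) : R :=
  let g := fun z' => rpow (\rsum_(x : X) rpow (PXZ (x, z')) (1 - s)) (/ (1 - s)) in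
  g z / \rsum_(z' : Z) g z'.

Definition renyiH_down (X Z : finType) (PXZ : X * Z -> R) (s : R) : R :=
  renyiH_cond PXZ (marginalZ PXZ) s.

Definition renyiH_up (X Z : finType) (PXZ : X * Z -> R) (s : R) : R :=
  renyiH_cond PXZ (tiltedZ PXZ s) s.

From HB Require Import structures.
From mathcomp Require Import all_boot all_order all_algebra.
From mathcomp Require Import Rstruct.
From Stdlib Require Import Reals ClassicalEpsilon Classical Lra.
Set Implicit Arguments. Unset Strict Implicit. Unset Printing Implicit Defensive.
Local Open Scope R_scope.
(* Stdlib's [R_scope] has taken over the key [%R]. *)
Local Delimit Scope ring_scope with ring.

(* Random coding with the MAP decoder.  Draw the encoder uniformly among all
   maps M -> X.  Message m with noise (x, z) is decoded wrongly only if some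
   m' <> m scores at least as well, so the error is at most
   min(1, #{m' <> m : P(m') P(x + e(m) - e(m'), z) >= P(m) P(x, z)}).
   For m' <> m the difference e(m) - e(m') is uniform on X, so averaging over
   the encoders and moving the average inside the (concave) min(1, .) gives
   min(1, K / |X|), where K counts the pairs (m', u) with
   P(m') P(u, z) >= P(m) P(x, z).  Bounding that indicator by
   (P(m') P(u, z) / (P(m) P(x, z)))^r and min(1, t) by t^rho turns the
   resulting expression into a product of power sums: r = 1, rho = s gives
   the bound with H^down, and r = 1 - s, rho = s / (1 - s) (which is <= 1
   exactly when s <= 1/2) gives the bound with H^up. *)

Section RealSums.
Variable I : finType.

Lemma rsum_le (F G : I -> R) : (forall i, F i <= G i) ->
  \rsum_(i : I) F i <= \rsum_(i : I) G i.
Proof.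
move=> FG; apply: (big_ind2 (fun x y => x <= y)) => //; first lra.
by move=> *; apply: Rplus_le_compat.
Qed.

Lemma rsum_ge0 (F : I -> R) : (forall i, 0 <= F i) -> 0 <= \rsum_(i : I) F i.
Proof.
by move=> F_ge0; apply: (big_ind (fun x => 0 <= x)) => //; [lra | move=> *; lra].
Qed.

Lemma rsum_ge_term (F : I -> R) (i0 : I) : (forall i, 0 <= F i) ->
  F i0 <= \rsum_(i : I) F i.
Proof.
move=> F_ge0; rewrite (bigD1 i0) //=.
have : 0 <= \big[Rplus/0]_(i | i != i0) F i.
  by apply: (big_ind (fun x => 0 <= x)) => //; [lra | move=> *; lra].
lra.
Qed.

Lemma rsum_gt0 (F : I -> R) (i0 : I) : (forall i, 0 <= F i) -> 0 < F i0 ->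
  0 < \rsum_(i : I) F i.
Proof. by move=> F_ge0 Fi0; apply: Rlt_le_trans Fi0 (rsum_ge_term _ F_ge0). Qed.

Lemma rsum_const (a : R) : \rsum_(i : I) a = INR #|I| * a.
Proof.
rewrite big_const; elim: #|I| => [|k IHk]; first by rewrite /=; lra.
by rewrite iterS IHk S_INR; lra.
Qed.

Lemma rsum_distrr (a : R) (F : I -> R) :
  a * (\rsum_(i : I) F i) = \rsum_(i : I) (a * F i).
Proof. by rewrite big_distrr. Qed.

Lemma rsum_distrl (a : R) (F : I -> R) :
  (\rsum_(i : I) F i) * a = \rsum_(i : I) (F i * a).
Proof. by rewrite big_distrl. Qed.

Lemma exists_le_average (i0 : I) (G : I -> R) (B : R) :
  \rsum_(i : I) G i <= INR #|I| * B -> exists i, G i <= B.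
Proof.
move=> sumG; apply: NNPP => noG.
have gtB i : B < G i by apply: Rnot_le_lt => GiB; apply: noG; exists i.
have : 0 < \rsum_(i : I) (G i - B).
  by apply: (@rsum_gt0 _ i0) => [i|]; [have := gtB i | have := gtB i0]; lra.
rewrite big_split /= -/(\rsum_(i : I) G i) (rsum_const (- B)); lra.
Qed.

Lemma rsum_Rmin1_le (i0 : I) (N : I -> R) :
  \rsum_(i : I) Rmin 1 (N i) <= INR #|I| * Rmin 1 ((\rsum_(i : I) N i) / INR #|I|).
Proof.
have I_gt0 : 0 < INR #|I| by apply/lt_0_INR/ltP/card_gt0P; exists i0.
rewrite /Rmin; case: Rle_dec => h.
- by rewrite Rmult_1_r -(Rmult_1_r (INR _)) -rsum_const; apply: rsum_le => i; apply: Rmin_l.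
- rewrite /Rdiv Rmult_comm Rmult_assoc Rinv_l; last lra.
  by rewrite Rmult_1_r; apply: rsum_le => i; apply: Rmin_r.
Qed.

End RealSums.

Lemma rsum_prod (I J : finType) (F : I -> R) (G : J -> R) :
  \rsum_(i : I) \rsum_(j : J) (F i * G j) = (\rsum_(i : I) F i) * (\rsum_(j : J) G j).
Proof.
by rewrite rsum_distrl; apply: eq_bigr => i _; rewrite rsum_distrr.
Qed.

Lemma rsum_pair (I J : finType) (F : I * J -> R) :
  \rsum_(ij : I * J) F ij = \rsum_(j : J) \rsum_(i : I) F (i, j).
Proof. by rewrite exchange_big pair_big; apply: eq_bigr => -[]. Qed.

Lemma Inf_le (S : R -> Prop) (b x : R) : (forall y, S y -> b <= y) -> S x -> Inf S <= x.
Proof.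
move=> S_ge Sx.
have [r inf_r] : exists r, is_inf S r.
  have [m [ub_m lub_m]] : {m | is_lub (fun y => S (- y)) m}.
    apply: completeness; first by exists (- b) => y /S_ge; lra.
    by exists (- x); rewrite Ropp_involutive.
  exists (- m); split=> [y Sy | c c_le].
  - suff : - y <= m by lra.
    by apply: ub_m; rewrite Ropp_involutive.
  - suff : m <= - c by lra.
    by apply: lub_m => y /c_le; lra.
by case: (epsilon_spec (inhabits 0) (is_inf S) (ex_intro _ r inf_r)) => + _; apply.
Qed.

Lemma Pjs_le_code (M X Y : finType) (PM : M -> R) (W : Y -> X -> R) e d :
  (forall m, 0 <= PM m) -> (forall y x, 0 <= W y x) ->
  Pjs PM W <= Pjs_code PM W e d.
Proof.
move=> PM_ge0 W_ge0; apply: (@Inf_le _ 0); last by exists e, d.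
move=> _ [e' [d' ->]]; apply: rsum_ge0 => m; apply: Rmult_le_pos => //.
by apply: rsum_ge0 => y; case: ifP => _ //; lra.
Qed.

Lemma is_distr_exists_gt0 (T : finType) (P : T -> R) : is_distr P -> exists t, 0 < P t.
Proof.
move=> [P_ge0 sumP]; apply: NNPP => noP.
have : \rsum_(t : T) P t <= \rsum_(t : T) 0.
  by apply: rsum_le => t; apply: Rnot_lt_le => Pt; apply: noP; exists t.
rewrite sumP big1 //; lra.
Qed.

Lemma INR_card_gt0 (X : finZmodType) : 0 < INR #|X|.
Proof. by apply/lt_0_INR/ltP/card_gt0P; exists 0%ring. Qed.

Lemma Rmin1_le_Rpower t r : 0 < t -> 0 < r <= 1 -> Rmin 1 t <= Rpower t r.
Proof.
move=> t_gt0 r_01; rewrite /Rpower.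
have exp_le a b : a <= b -> exp a <= exp b.
  by case/Rle_lt_or_eq_dec => [/exp_increasing/Rlt_le | ->] //; lra.
case: (Rle_lt_dec 0 (ln t)) => ln_t.
- apply: Rle_trans (Rmin_l _ _) _; rewrite -exp_0.
  by apply: exp_le; nra.
- apply: Rle_trans (Rmin_r _ _) _; rewrite -{1}(exp_ln t t_gt0).
  by apply: exp_le; nra.
Qed.

Lemma rpow_ge0 x a : 0 <= rpow x a.
Proof. by rewrite /rpow; case: Rlt_dec => h /=; [apply/Rlt_le/exp_pos | lra]. Qed.

Lemma rpowE x a : 0 < x -> rpow x a = Rpower x a.
Proof. by rewrite /rpow; case: Rlt_dec. Qed.

Lemma rpow0n a : rpow 0 a = 0.
Proof. by rewrite /rpow; case: Rlt_dec => h //; exfalso; lra. Qed.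

Lemma rpow_gt0 x a : 0 < x -> 0 < rpow x a.
Proof. by move=> x_gt0; rewrite rpowE //; apply: exp_pos. Qed.

Lemma rpow1n a : rpow 1 a = 1.
Proof. by rewrite rpowE /Rpower ?ln_1 ?Rmult_0_r ?exp_0 //; lra. Qed.

Lemma rpow1 x : 0 <= x -> rpow x 1 = x.
Proof.
by case/Rle_lt_or_eq_dec=> [x_gt0 | <-]; [rewrite rpowE ?Rpower_1 | rewrite rpow0n].
Qed.

Lemma rpowM x y a : 0 <= x -> 0 <= y -> rpow (x * y) a = rpow x a * rpow y a.
Proof.
case/Rle_lt_or_eq_dec=> [x_gt0 | <-]; last by rewrite Rmult_0_l !rpow0n Rmult_0_l.
case/Rle_lt_or_eq_dec=> [y_gt0 | <-]; last by rewrite Rmult_0_r !rpow0n Rmult_0_r.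
by rewrite !rpowE ?Rpower_mult_distr //; apply: Rmult_lt_0_compat.
Qed.

Lemma mul_rpow x a : 0 <= x -> x * rpow x a = rpow x (1 + a).
Proof.
case/Rle_lt_or_eq_dec=> [x_gt0 | <-]; last by rewrite !rpow0n Rmult_0_l.
by rewrite !rpowE // Rpower_plus Rpower_1.
Qed.

Lemma mul_rpow_div x p G s : 0 <= x -> 0 < G ->
  x * rpow (rpow x p / G) s = rpow x (1 + p * s) * Rpower G (- s).
Proof.
case/Rle_lt_or_eq_dec=> [x_gt0 G_gt0 | <- _]; last by rewrite !rpow0n !Rmult_0_l.
rewrite !rpowE //; last by apply: Rdiv_lt_0_compat => //; apply: exp_pos.
rewrite /Rpower /Rdiv ln_mult ?ln_Rinv ?ln_exp //;
  try by [apply: exp_pos | apply: Rinv_0_lt_compat].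
by rewrite -{1}(exp_ln x x_gt0) -!exp_plus; f_equal; ring.
Qed.

Lemma rpow_mul_ifE x a y :
  rpow x a * y = if Rlt_dec 0 x then Rpower x a * y else 0.
Proof. by rewrite /rpow; case: Rlt_dec => h //; rewrite Rmult_0_l. Qed.

Definition indic_le (c t : R) : R := if Rle_dec c t then 1 else 0.

Lemma indic_le_ge0 c t : 0 <= indic_le c t.
Proof. by rewrite /indic_le; case: Rle_dec => h /=; lra. Qed.

Lemma indic_le_Markov c t r : 0 < c -> 0 <= t -> 0 < r ->
  indic_le c t <= rpow t r / Rpower c r.
Proof.
move=> c_gt0 t_ge0 r_gt0; have cr_gt0 : 0 < Rpower c r := exp_pos _.
rewrite /indic_le; case: Rle_dec => [ct | nct]; last first.
  by apply: Rmult_le_pos; [apply: rpow_ge0 | apply/Rlt_le/Rinv_0_lt_compat].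
rewrite rpowE; last lra.
apply: (Rmult_le_reg_r (Rpower c r)) => //.
rewrite /Rdiv Rmult_assoc Rinv_l; last lra.
by rewrite !Rmult_1_l Rmult_1_r; apply: Rle_Rpower_l; lra.
Qed.

(* With t := B / (c^r n): min(1, K / n) <= min(1, t) <= t^rho. *)
Lemma mul_Rmin1_le c n B K r rho : 0 < c -> 0 < n -> 0 < B -> 0 < rho <= 1 ->
  K <= B / Rpower c r ->
  c * Rmin 1 (K / n) <= Rpower c (1 - r * rho) * Rpower B rho * Rpower n (- rho).
Proof.
move=> c_gt0 n_gt0 B_gt0 rho_01 K_le.
have cr_gt0 : 0 < Rpower c r := exp_pos _.
have t_gt0 : 0 < B / Rpower c r / n.
  by apply: Rdiv_lt_0_compat => //; apply: Rdiv_lt_0_compat.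
apply: Rle_trans (_ : _ <= c * Rpower (B / Rpower c r / n) rho) _.
  apply: Rmult_le_compat_l; first lra.
  apply: Rle_trans (Rmin1_le_Rpower t_gt0 rho_01).
  apply: Rle_min_compat_l; apply: Rmult_le_compat_r => //.
  by apply/Rlt_le/Rinv_0_lt_compat.
apply: Req_le; rewrite /Rpower /Rdiv !ln_mult ?ln_Rinv ?ln_exp //;
  try by apply: Rinv_0_lt_compat.
  rewrite -{1}(exp_ln c c_gt0) -!exp_plus; f_equal; ring.
by apply: Rmult_lt_0_compat => //; apply: Rinv_0_lt_compat.
Qed.

Definition power_sum (T : finType) (P : T -> R) (a : R) : R := \rsum_(t : T) rpow (P t) a.

Lemma power_sum_ge0 (T : finType) (P : T -> R) a : 0 <= power_sum P a.
Proof. by apply: rsum_ge0 => t; apply: rpow_ge0. Qed.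

Lemma power_sum_gt0 (T : finType) (P : T -> R) a t : 0 < P t -> 0 < power_sum P a.
Proof.
by move=> Pt; apply: (@rsum_gt0 _ _ t) => [u|]; [apply: rpow_ge0 | apply: rpow_gt0].
Qed.

Lemma power_sum1 (T : finType) (P : T -> R) : (forall t, 0 <= P t) ->
  power_sum P 1 = \rsum_(t : T) P t.
Proof. by move=> P_ge0; apply: eq_bigr => t _; rewrite rpow1. Qed.

Lemma is_distr_power_sum_gt0 (T : finType) (P : T -> R) a : is_distr P -> 0 < power_sum P a.
Proof. by case/is_distr_exists_gt0 => t; apply: power_sum_gt0. Qed.

Section RandomCoding.
Variables (X : finZmodType) (Z M : finType) (PXZ : X * Z -> R) (PM : M -> R).
Hypotheses (PXZ_ge0 : forall xz, 0 <= PXZ xz) (PM_ge0 : forall m, 0 <= PM m).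

Definition threshold_count (m : M) (xz : X * Z) : R :=
  \rsum_(m' : M) \rsum_(u : X) indic_le (PM m * PXZ xz) (PM m' * PXZ (u, xz.2)).

Definition random_coding_bound : R :=
  \rsum_(m : M) \rsum_(xz : X * Z)
     (PM m * PXZ xz * Rmin 1 (threshold_count m xz / INR #|X|)).

Definition map_score (f : {ffun M -> X}) (y : X * Z) (m : M) : R :=
  PM m * add_channel PXZ y (f m).

Definition received (f : {ffun M -> X}) (m : M) (xz : X * Z) : X * Z :=
  ((xz.1 + f m)%ring, xz.2).

Lemma map_score_received (f : {ffun M -> X}) m m' xz :
  map_score f (received f m xz) m' = PM m' * PXZ ((xz.1 + (f m - f m'))%ring, xz.2).
Proof. by rewrite /map_score /received /add_channel /= GRing.addrA. Qed.

Lemma map_score_received_self (f : {ffun M -> X}) m xz :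
  map_score f (received f m xz) m = PM m * PXZ xz.
Proof. by rewrite map_score_received GRing.subrr GRing.addr0; case: xz. Qed.

Definition rivals (f : {ffun M -> X}) (m : M) (xz : X * Z) : R :=
  \rsum_(m' : M) (if m' != m then
     indic_le (map_score f (received f m xz) m) (map_score f (received f m xz) m')
   else 0).

Lemma rivals_ge0 (f : {ffun M -> X}) m xz : 0 <= rivals f m xz.
Proof. by apply: rsum_ge0 => m'; case: ifP => _; [apply: indic_le_ge0 | lra]. Qed.

Lemma rsum_ffun_sub (m m' : M) (g : X -> R) : m' != m ->
  INR #|X| * (\rsum_(f : {ffun M -> X}) g (f m - f m')%ring) =
  INR #|{ffun M -> X}| * (\rsum_(u : X) g u).
Proof.
move=> m'm.
pose shift (v : X) (f : {ffun M -> X}) : {ffun M -> X} :=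
  [ffun k => if k == m then (f k + v)%ring else f k].
have shift_inj v : injective (shift v).
  move=> f1 f2 /ffunP eqf; apply/ffunP => k; have := eqf k; rewrite !ffunE.
  by case: (k == m) => //; apply: GRing.addIr.
rewrite -rsum_const -(rsum_const _ (\rsum_(u : X) g u)).
rewrite (eq_bigr (fun v => \rsum_(f : {ffun M -> X}) g (shift v f m - shift v f m')%ring));
  last by move=> v _; rewrite (reindex_inj (shift_inj v)).
rewrite exchange_big; apply: eq_bigr => f _.
have sub_inj : injective (fun v : X => (f m + v - f m')%ring).
  by move=> v1 v2 /GRing.addIr /GRing.addrI.
rewrite [RHS](reindex_inj sub_inj); apply: eq_bigr => v _.
by rewrite !ffunE eqxx (negbTE m'm).
Qed.

Lemma rsum_rivals_le m xz :
  (\rsum_(f : {ffun M -> X}) rivals f m xz) / INR #|{ffun M -> X}| <=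
  threshold_count m xz / INR #|X|.
Proof.
have n_gt0 := INR_card_gt0 X.
have F_gt0 : 0 < INR #|{ffun M -> X}|.
  by apply/lt_0_INR/ltP/card_gt0P; exists [ffun=> 0%ring].
rewrite /rivals exchange_big /threshold_count /Rdiv !rsum_distrl; apply: rsum_le => m'.
have [-> | m'm] := eqVneq m' m.
  rewrite big1 // Rmult_0_l; apply: Rmult_le_pos; last exact/Rlt_le/Rinv_0_lt_compat.
  by apply: rsum_ge0 => u; apply: indic_le_ge0.
pose g u := indic_le (PM m * PXZ xz) (PM m' * PXZ ((xz.1 + u)%ring, xz.2)).
have -> : \rsum_(u : X) indic_le (PM m * PXZ xz) (PM m' * PXZ (u, xz.2)) = \rsum_(u : X) g u.
  by rewrite (reindex_inj (GRing.addrI xz.1)).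
rewrite (eq_bigr (fun f : {ffun M -> X} => g (f m - f m')%ring)); last first.
  by move=> f _; rewrite map_score_received_self map_score_received.
apply: Req_le; apply: (Rmult_eq_reg_l (INR #|X|)); last lra.
by rewrite -Rmult_assoc rsum_ffun_sub //; field; lra.
Qed.

Section MAPDecoder.
Variable m0 : M.

Definition map_decoder (f : {ffun M -> X}) (y : X * Z) : M :=
  Order.arg_max m0 xpredT (map_score f y).

Lemma map_decoder_max (f : {ffun M -> X}) y m :
  map_score f y m <= map_score f y (map_decoder f y).
Proof.
rewrite /map_decoder.
by case: (Order.TotalTheory.arg_maxP (map_score f y) (isT : xpredT m0)) => i _ max_i;
  apply/RleP/max_i.
Qed.

Lemma map_decoder_error_le (f : {ffun M -> X}) :
  Pjs_code PM (add_channel PXZ) f (map_decoder f) <=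
  \rsum_(m : M) \rsum_(xz : X * Z) (PM m * PXZ xz * Rmin 1 (rivals f m xz)).
Proof.
rewrite /Pjs_code; apply: rsum_le => m.
have received_inj : injective (received f m).
  by move=> [x1 z1] [x2 z2] [/GRing.addIr -> ->].
rewrite (reindex_inj received_inj) rsum_distrr; apply: rsum_le => xz.
have channel_self : add_channel PXZ (received f m xz) (f m) = PXZ xz.
  by rewrite /add_channel /= GRing.addrK; case: xz.
rewrite channel_self Rmult_assoc; apply: Rmult_le_compat_l => //.
have min_ge0 : 0 <= Rmin 1 (rivals f m xz).
  by apply: Rmin_glb; [lra | apply: rivals_ge0].
case: ifPn => [wrong | _]; last by apply: Rmult_le_pos.
suff one_le : 1 <= rivals f m xz by rewrite Rmin_left; lra.
(* The decoded message is a rival: it scores at least as well as m. *)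
apply: Rle_trans (rsum_ge_term (map_decoder f (received f m xz)) _); last first.
  by move=> m'; case: ifP => _; [apply: indic_le_ge0 | lra].
rewrite wrong /indic_le; case: Rle_dec => [_ | not_le] /=; first lra.
by case: not_le; apply: map_decoder_max.
Qed.

Lemma exists_code_le_random_coding_bound :
  exists (e : M -> X) (d : X * Z -> M),
    Pjs_code PM (add_channel PXZ) e d <= random_coding_bound.
Proof.
pose f0 : {ffun M -> X} := [ffun=> 0%ring].
suff [f f_le] : exists f : {ffun M -> X},
    Pjs_code PM (add_channel PXZ) f (map_decoder f) <= random_coding_bound.
  by exists f, (map_decoder f).
apply: (exists_le_average f0).
apply: Rle_trans (rsum_le map_decoder_error_le) _.
rewrite exchange_big /random_coding_bound rsum_distrr; apply: rsum_le => m.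
rewrite exchange_big rsum_distrr; apply: rsum_le => xz.
rewrite -rsum_distrr [X in _ <= X]Rmult_comm [X in _ <= X]Rmult_assoc.
apply: Rmult_le_compat_l; first by apply: Rmult_le_pos.
rewrite Rmult_comm; apply: Rle_trans (rsum_Rmin1_le f0 _) _.
apply: Rmult_le_compat_l; first exact: pos_INR.
apply: Rle_min_compat_l; exact: rsum_rivals_le.
Qed.

End MAPDecoder.

Lemma threshold_count_le m xz r : 0 < r -> 0 < PM m * PXZ xz ->
  threshold_count m xz <=
  power_sum PM r * power_sum (fun u => PXZ (u, xz.2)) r / Rpower (PM m * PXZ xz) r.
Proof.
move=> r_gt0 c_gt0; rewrite /power_sum /Rdiv -rsum_prod rsum_distrl.
apply: rsum_le => m'; rewrite rsum_distrl; apply: rsum_le => u.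
by rewrite -rpowM //; apply: indic_le_Markov => //; apply: Rmult_le_pos.
Qed.

Lemma random_coding_term_le r rho m xz : 0 < r -> 0 < rho <= 1 ->
  PM m * PXZ xz * Rmin 1 (threshold_count m xz / INR #|X|) <=
  rpow (power_sum PM r) rho *
  (rpow (PM m) (1 - r * rho) *
   (rpow (PXZ xz) (1 - r * rho) * rpow (power_sum (fun u => PXZ (u, xz.2)) r) rho)) *
  Rpower (INR #|X|) (- rho).
Proof.
move=> r_gt0 rho_01.
have n_gt0 := INR_card_gt0 X.
case: (Rlt_dec 0 (PM m * PXZ xz)) => [c_gt0 | c_le0]; last first.
  have -> : PM m * PXZ xz = 0 by have := Rmult_le_pos _ _ (PM_ge0 m) (PXZ_ge0 xz); lra.
  rewrite Rmult_0_l.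
  by repeat apply: Rmult_le_pos; try apply: rpow_ge0; apply/Rlt_le/exp_pos.
have PM_gt0 : 0 < PM m by have := PM_ge0 m; have := PXZ_ge0 xz; nra.
have PXZ_gt0 : 0 < PXZ xz by have := PM_ge0 m; have := PXZ_ge0 xz; nra.
have SM_gt0 : 0 < power_sum PM r := power_sum_gt0 r PM_gt0.
have SX_gt0 : 0 < power_sum (fun u => PXZ (u, xz.2)) r.
  by apply: (@power_sum_gt0 _ _ _ xz.1); rewrite /= -surjective_pairing.
apply: Rle_trans (mul_Rmin1_le c_gt0 n_gt0 (Rmult_lt_0_compat _ _ SM_gt0 SX_gt0) rho_01
  (threshold_count_le r_gt0 c_gt0)) _.
rewrite !rpowE // -(Rpower_mult_distr _ _ _ PM_gt0 PXZ_gt0)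
  -(Rpower_mult_distr _ _ _ SM_gt0 SX_gt0).
by apply: Req_le; ring.
Qed.

Lemma random_coding_bound_le r rho : 0 < r -> 0 < rho <= 1 ->
  random_coding_bound <=
  rpow (power_sum PM r) rho *
  (power_sum PM (1 - r * rho) *
   (\rsum_(xz : X * Z)
      (rpow (PXZ xz) (1 - r * rho) * rpow (power_sum (fun u => PXZ (u, xz.2)) r) rho))) *
  Rpower (INR #|X|) (- rho).
Proof.
move=> r_gt0 rho_01.
rewrite -rsum_prod rsum_distrr rsum_distrl; apply: rsum_le => m.
rewrite rsum_distrr rsum_distrl; apply: rsum_le => xz.
exact: random_coding_term_le.
Qed.

End RandomCoding.

Lemma Pjs_le_random_coding_bound (X : finZmodType) (Z M : finType)
    (PXZ : X * Z -> R) (PM : M -> R) :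
  is_distr PXZ -> is_distr PM -> Pjs PM (add_channel PXZ) <= random_coding_bound PXZ PM.
Proof.
move=> [PXZ_ge0 _] distr_PM; have [m0 _] := is_distr_exists_gt0 distr_PM.
have [PM_ge0 _] := distr_PM.
have [e [d code_le]] := exists_code_le_random_coding_bound PXZ_ge0 PM_ge0 m0.
apply: Rle_trans code_le; apply: Pjs_le_code => // y x; exact: PXZ_ge0.
Qed.

Definition cond_renyi_sum (X Z : finType) (PXZ : X * Z -> R) (QZ : Z -> R) (s : R) : R :=
  \rsum_(xz : X * Z) (rpow (PXZ xz) (1 - s) * rpow (QZ xz.2) s).

Lemma renyiH_condE (X Z : finType) (PXZ : X * Z -> R) (QZ : Z -> R) s :
  renyiH_cond PXZ QZ s = / s * ln (cond_renyi_sum PXZ QZ s).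
Proof. by congr (_ * ln _); apply: eq_bigr => xz _; rewrite rpow_mul_ifE. Qed.

Lemma cond_renyi_sum_marginal_gt0 (X Z : finType) (PXZ : X * Z -> R) s :
  is_distr PXZ -> 0 < cond_renyi_sum PXZ (marginalZ PXZ) s.
Proof.
move=> distr_PXZ; have [PXZ_ge0 _] := distr_PXZ.
have [[x z] PXZ_gt0] := is_distr_exists_gt0 distr_PXZ.
have marg_gt0 : 0 < marginalZ PXZ z.
  exact: Rlt_le_trans PXZ_gt0 (@rsum_ge_term _ (fun u => PXZ (u, z)) x (fun _ => PXZ_ge0 _)).
apply: (@rsum_gt0 _ _ (x, z)) => [xz|]; first by apply: Rmult_le_pos; apply: rpow_ge0.
by apply: Rmult_lt_0_compat; apply: rpow_gt0.
Qed.

Definition gallager_sum (X Z : finType) (PXZ : X * Z -> R) (s : R) : R :=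
  \rsum_(z : Z) rpow (power_sum (fun x => PXZ (x, z)) (1 - s)) (/ (1 - s)).

Lemma gallager_sum_gt0 (X Z : finType) (PXZ : X * Z -> R) s :
  is_distr PXZ -> 0 < gallager_sum PXZ s.
Proof.
case/is_distr_exists_gt0 => -[x z] PXZ_gt0.
apply: (@rsum_gt0 _ _ z) => [z'|]; first exact: rpow_ge0.
exact/rpow_gt0/(@power_sum_gt0 _ (fun u => PXZ (u, z)) _ x).
Qed.

Section GallagerSum.
Variables (X Z : finType) (PXZ : X * Z -> R) (s : R).
Hypothesis s_01 : 0 < s < 1.

Lemma gallager_sum_eq :
  \rsum_(xz : X * Z)
     (rpow (PXZ xz) (1 - s) * rpow (power_sum (fun u => PXZ (u, xz.2)) (1 - s)) (s / (1 - s)))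
  = gallager_sum PXZ s.
Proof.
rewrite rsum_pair; apply: eq_bigr => z _ /=.
rewrite -rsum_distrl mul_rpow; last exact: power_sum_ge0.
by congr rpow; field; lra.
Qed.

Lemma cond_renyi_sum_tilted : 0 < gallager_sum PXZ s ->
  cond_renyi_sum PXZ (tiltedZ PXZ s) s = Rpower (gallager_sum PXZ s) (1 - s).
Proof.
move=> G_gt0; rewrite /cond_renyi_sum rsum_pair.
rewrite (eq_bigr (fun z => rpow (power_sum (fun x => PXZ (x, z)) (1 - s)) (/ (1 - s)) *
                         Rpower (gallager_sum PXZ s) (- s))); last first.
  move=> z _ /=; rewrite -rsum_distrl mul_rpow_div //; last exact: power_sum_ge0.
  by congr (rpow _ _ * _); field; lra.
rewrite -rsum_distrl -/(gallager_sum PXZ s) -{1}(Rpower_1 _ G_gt0) -Rpower_plus.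
by congr Rpower; ring.
Qed.

End GallagerSum.

Lemma Rpower_exp_renyi A D n s rho : 0 < A -> 0 < D -> 0 < n -> 0 < s ->
  Rpower (exp (/ s * ln A + / s * ln D) / n) rho = Rpower (A * D) (rho / s) * Rpower n (- rho).
Proof.
move=> A_gt0 D_gt0 n_gt0 s_gt0.
rewrite /Rpower /Rdiv ln_mult ?ln_exp ?ln_Rinv ?ln_mult //;
  try by [apply: exp_pos | apply: Rinv_0_lt_compat].
by rewrite -exp_plus; f_equal; field; lra.
Qed.

Lemma random_coding_bound_le_down (X : finZmodType) (Z M : finType)
    (PXZ : X * Z -> R) (PM : M -> R) s :
  (forall xz, 0 <= PXZ xz) -> is_distr PM -> 0 < s < 1 ->
  random_coding_bound PXZ PM <=
  power_sum PM (1 - s) * cond_renyi_sum PXZ (marginalZ PXZ) s * Rpower (INR #|X|) (- s).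
Proof.
move=> PXZ_ge0 [PM_ge0 sum_PM] s_01.
apply: Rle_trans (random_coding_bound_le PXZ_ge0 PM_ge0 Rlt_0_1 (conj (proj1 s_01) _)) _;
  first lra.
rewrite Rmult_1_l power_sum1 // sum_PM rpow1n Rmult_1_l.
apply: Req_le; congr (_ * _ * _); apply: eq_bigr => xz _.
by rewrite power_sum1.
Qed.

Lemma random_coding_bound_le_up (X : finZmodType) (Z M : finType)
    (PXZ : X * Z -> R) (PM : M -> R) s :
  is_distr PXZ -> is_distr PM -> 0 < s <= / 2 ->
  random_coding_bound PXZ PM <=
  Rpower (power_sum PM (1 - s) * Rpower (gallager_sum PXZ s) (1 - s)) (/ (1 - s)) *
  Rpower (INR #|X|) (- (s / (1 - s))).
Proof.
move=> distr_PXZ distr_PM s_half.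
have [[PXZ_ge0 _] [PM_ge0 _]] := (distr_PXZ, distr_PM).
have A_gt0 : 0 < power_sum PM (1 - s) := is_distr_power_sum_gt0 _ distr_PM.
have G_gt0 : 0 < gallager_sum PXZ s := gallager_sum_gt0 s distr_PXZ.
have rho_01 : 0 < s / (1 - s) <= 1.
  split; first by apply: Rdiv_lt_0_compat; lra.
  by apply: (Rmult_le_reg_r (1 - s)); [lra | rewrite /Rdiv Rmult_assoc Rinv_l; lra].
have r_gt0 : 0 < 1 - s by lra.
apply: Rle_trans (random_coding_bound_le PXZ_ge0 PM_ge0 r_gt0 rho_01) _.
have -> : (1 - s) * (s / (1 - s)) = s by field; lra.
rewrite gallager_sum_eq; last lra.
rewrite rpowE // -Rpower_mult_distr ?Rpower_mult; [| exact: A_gt0 | exact: exp_pos].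
have -> : (1 - s) * / (1 - s) = 1 by field; lra.
have -> : / (1 - s) = s / (1 - s) + 1 by field; lra.
by rewrite Rpower_plus !Rpower_1 //; apply: Req_le; ring.
Qed.

Theorem mainTheorem5 (X : finZmodType) (Z M : finType)
  (PXZ : X * Z -> R) (PM : M -> R) :
  is_distr PXZ -> is_distr PM ->
  (forall s, 0 < s < 1 ->
     Pjs PM (add_channel PXZ) <=
     Rpower (exp (renyiH PM s + renyiH_down PXZ s) / INR #|X|) s) /\
  (forall s, 0 < s <= / 2 ->
     Pjs PM (add_channel PXZ) <=
     Rpower (exp (renyiH PM s + renyiH_up PXZ s) / INR #|X|) (s / (1 - s))).
Proof.
move=> distr_PXZ distr_PM.
have n_gt0 := INR_card_gt0 X.
have Pjs_le := Pjs_le_random_coding_bound distr_PXZ distr_PM.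
split=> s s_range; apply: Rle_trans Pjs_le _;
  have A_gt0 : 0 < power_sum PM (1 - s) := is_distr_power_sum_gt0 _ distr_PM;
  rewrite /renyiH -/(power_sum PM (1 - s)).
- have D_gt0 := cond_renyi_sum_marginal_gt0 s distr_PXZ.
  rewrite /renyiH_down renyiH_condE Rpower_exp_renyi //; last lra.
  have -> : s / s = 1 by field; lra.
  rewrite Rpower_1; last exact: Rmult_lt_0_compat.
  by apply: random_coding_bound_le_down => //; case: distr_PXZ.
- have G_gt0 := gallager_sum_gt0 s distr_PXZ.
  rewrite /renyiH_up renyiH_condE cond_renyi_sum_tilted //; last lra.
  rewrite Rpower_exp_renyi //; [| exact: exp_pos | lra].
  have -> : s / (1 - s) / s = / (1 - s) by field; lra.
  exact: random_coding_bound_le_up.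
Qed.
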